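(* Let $\|\cdot\|$ be a submultiplicative matrix norm on $\mathbb{C}^{m\times m}$, let $n\ge 2$, and let $$A=\begin{bmatrix} A_1 & B_1 & & & \\ C_1 & A_2 & B_2 & & \\ & \ddots & \ddots & \ddots & \\ & & C_{n-2} & A_{n-1} & B_{n-1}\\ & & & C_{n-1} & A_n\end{bmatrix},\qquad A_i,B_i,C_i\in\mathbb{C}^{m\times m},$$ be a block tridiagonal matrix such that $A$ is nonsingular, $B_i$ and $C_i$ are nonsingular for $i=1,\dots,n-1$, $A$ is row block diagonally dominant with respect to $\|\cdot\|$, and $$\|A_1^{-1}B_1\|<1\quad\text{and}\quad \|A_n^{-1}C_{n-1}\|<1.$$ Let $U_i,Y_i$ ($i=1,\dots,n$) be the matrices defined by the recurrences in the context. Then the sequence $\{\|U_i\|\}_{i=1}^n$ is strictly increasing and the sequence $\{\|Y_i\|\}_{i=1}^n$ is strictly decreasing.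
   Context: Row block diagonal dominance: a block matrix $A=[A_{ij}]$ with blocks $A_{ij}\in\mathbb{C}^{m\times m}$, $i,j=1,\dots,n$, is called row block diagonally dominant (with respect to $\|\cdot\|$) if all diagonal blocks $A_{ii}$ are nonsingular and $\sum_{j\ne i}\|A_{ii}^{-1}A_{ij}\|\le 1$ for $i=1,\dots,n$. For the block tridiagonal $A$ above (block $(i,i)$ is $A_i$, block $(i,i+1)$ is $B_i$, block $(i+1,i)$ is $C_i$), with the convention $C_0=B_n=0$, this means: every $A_i$ is nonsingular and $\|A_i^{-1}C_{i-1}\|+\|A_i^{-1}B_i\|\le 1$ for $i=1,\dots,n$. The matrices $U_i,V_i,X_i,Y_i$ are defined recursively by $U_1=I$, $U_2=-B_1^{-1}A_1U_1$, $U_i=-B_{i-1}^{-1}(C_{i-2}U_{i-2}+A_{i-1}U_{i-1})$ for $i=3,\dots,n$; $V_n=(A_nU_n+C_{n-1}U_{n-1})^{-1}$, $V_{n-1}=-V_nA_nB_{n-1}^{-1}$, $V_i=-(V_{i+1}A_{i+1}+V_{i+2}C_{i+1})B_i^{-1}$ for $i=n-2,\dots,1$; $X_1=I$, $X_2=-X_1A_1C_1^{-1}$, $X_i=-(X_{i-2}B_{i-2}+X_{i-1}A_{i-1})C_{i-1}^{-1}$ for $i=3,\dots,n$; $Y_n=(X_nA_n+X_{n-1}B_{n-1})^{-1}$, $Y_{n-1}=-C_{n-1}^{-1}A_nY_n$, $Y_i=-C_i^{-1}(A_{i+1}Y_{i+1}+B_{i+1}Y_{i+2})$ for $i=n-2,\dots,1$.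 (It is known, by a result of Ikebe, that when $A$ and all $B_i,C_i$ are nonsingular, the inverses appearing here exist, and $A^{-1}=[Z_{ij}]$ with $Z_{ij}=U_iV_j$ for $i\le j$ and $Z_{ij}=Y_iX_j$ for $i\ge j$.) *)

(* Complex numbers: an arbitrary numClosedFieldType C
   (covers the complex numbers; the result is stated for all such C). *)
From HB Require Import structures.
From mathcomp Require Import all_boot all_order all_algebra.
Set Implicit Arguments. Unset Strict Implicit. Unset Printing Implicit Defensive.
Import Order.TTheory GRing.Theory Num.Theory.
Local Open Scope ring_scope.

Section Defs.
Variables (C : numClosedFieldType) (m : nat).
Local Notation M := 'M[C]_m.

Definition submult_norm (N : M -> C) : Prop :=
  [/\ (forall X, 0 <= N X),
      (forall X, N X = 0 -> X = 0),
      (forall (a : C) X, N (a *: X) = `|a| * N X),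
      (forall X Y, N (X + Y) <= N X + N Y)
    & (forall X Y, N (X *m Y) <= N X * N Y)].

(* block matrices are given by families blk : nat -> nat -> M, 1-based indices *)
Definition blockmx (n : nat) (blk : nat -> nat -> M) :=
  \mxblock_(i < n, j < n) (blk i.+1 j.+1 : 'M[C]_((fun _ : 'I_n => m) i, (fun _ : 'I_n => m) j)).

Definition tridiag (A B Cm : nat -> M) (i j : nat) : M :=
  if i == j then A i
  else if j == i.+1 then B i
  else if i == j.+1 then Cm j
  else 0.

Definition row_block_dd (N : M -> C) (n : nat) (blk : nat -> nat -> M) : Prop :=
  forall i, (1 <= i <= n)%N ->
    blk i i \in unitmx /\
    \sum_(1 <= j < n.+1 | j != i) N (invmx (blk i i) *m blk i j) <= 1.

(* Useq k = (U_{k+1}, U_{k+2}) *)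
Fixpoint Useq (A B Cm : nat -> M) (k : nat) : M * M :=
  match k with
  | 0 => (1%:M, - (invmx (B 1%N) *m (A 1%N *m 1%:M)))
  | k'.+1 => let: (u, v) := Useq A B Cm k' in
      (v, - (invmx (B k'.+2) *m (Cm k'.+1 *m u + A k'.+2 *m v)))
  end.

Definition Umat (A B Cm : nat -> M) (i : nat) : M := (Useq A B Cm i.-1).1.

(* Xseq k = (X_{k+1}, X_{k+2}) *)
Fixpoint Xseq (A B Cm : nat -> M) (k : nat) : M * M :=
  match k with
  | 0 => (1%:M, - (1%:M *m A 1%N *m invmx (Cm 1%N)))
  | k'.+1 => let: (x, y) := Xseq A B Cm k' in
      (y, - ((x *m B k'.+1 + y *m A k'.+2) *m invmx (Cm k'.+2)))
  end.

Definition Xmat (A B Cm : nat -> M) (i : nat) : M := (Xseq A B Cm i.-1).1.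

(* Yseq n k = (Y_{n-k-1}, Y_{n-k}) *)
Fixpoint Yseq (A B Cm : nat -> M) (n k : nat) : M * M :=
  match k with
  | 0 => let yn := invmx (Xmat A B Cm n *m A n + Xmat A B Cm n.-1 *m B n.-1) in
         (- (invmx (Cm n.-1) *m A n *m yn), yn)
  | k'.+1 => let: (y1, y2) := Yseq A B Cm n k' in
      let i := (n - k'.+2)%N in
      (- (invmx (Cm i) *m (A i.+1 *m y1 + B i.+1 *m y2)), y1)
  end.

Definition Ymat (A B Cm : nat -> M) (n i : nat) : M := (Yseq A B Cm n (n - i)).2.

End Defs.

(* Solving the recurrence for the middle term gives
   U_i = - (A_i^-1 B_i) U_(i+1) - (A_i^-1 C_(i-1)) U_(i-1), hence
   |U_i| <= b |U_(i+1)| + c |U_(i-1)| with b + c <= 1 by dominance and c > 0;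
   so |U_(i-1)| < |U_i| forces |U_i| < |U_(i+1)|, and the induction starts from
   U_1 = - (A_1^-1 B_1) U_2 with |A_1^-1 B_1| < 1.  The Y_i satisfy the mirror
   recurrence from the bottom row, starting from Y_(n-1) = - C_(n-1)^-1 A_n Y_n;
   here Y_n <> 0 is needed, and it holds because the block row (X_1, ..., X_n)
   annihilates every block column of A but the last, where it produces
   X_n A_n + X_(n-1) B_(n-1): this matrix vanishing would make A singular. *)

From HB Require Import structures.
From mathcomp Require Import all_boot all_order all_algebra.
From mathcomp Require Import zify.
Set Implicit Arguments.
Unset Strict Implicit.
Unset Printing Implicit Defensive.
Import Order.TTheory GRing.Theory Num.Theory.
Local Open Scope ring_scope.

Lemma ltr_three_term (R : numDomainType) (b c u0 u1 u2 : R) :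
  0 <= b -> 0 < c -> b + c <= 1 -> 0 <= u0 -> u0 < u1 ->
  u1 <= b * u2 + c * u0 -> u1 < u2.
Proof.
move=> b_ge0 c_gt0 bc_le1 u0_ge0 u01 u1_le.
have u1_ge0 : 0 <= u1 by apply: le_trans (ltW u01).
have bu1_lt : b * u1 < b * u2.
  have : u1 < b * u2 + c * u1.
    by apply: le_lt_trans u1_le _; rewrite ltrD2l ltr_pM2l.
  rewrite -ltrBlDr; apply: le_lt_trans.
  by rewrite -{2}(mul1r u1) -mulrBl ler_wpM2r // lerBrDr.
have b_gt0 : 0 < b.
  rewrite lt_def b_ge0 andbT; apply: contraTneq bu1_lt => ->.
  by rewrite !mul0r ltxx.
by rewrite -(ltr_pM2l b_gt0).
Qed.

Section MatrixNorm.
Variables (C : numClosedFieldType) (m : nat) (N : 'M[C]_m.+1 -> C).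
Hypothesis normN : submult_norm N.
Local Notation M := 'M[C]_m.+1.

Lemma unitmx_neq0 (X : M) : X \in unitmx -> X != 0.
Proof. by apply: contraTneq => ->; rewrite unitmxE det0 unitr0. Qed.

Lemma norm_ge0 (X : M) : 0 <= N X.
Proof. by case: normN. Qed.

Lemma norm_gt0 (X : M) : X != 0 -> 0 < N X.
Proof.
case: normN => _ N_eq0 _ _ _ X_neq0.
by rewrite lt_def norm_ge0 andbT; apply: contra_neq X_neq0 => /N_eq0.
Qed.

Lemma normNmx (X : M) : N (- X) = N X.
Proof. by case: normN => _ _ normZ _ _; rewrite -scaleN1r normZ normrN1 mul1r. Qed.

Lemma norm_mulmx_le (X Y : M) : N (X *m Y) <= N X * N Y.
Proof. by case: normN. Qed.

Lemma norm_addmx_le (X Y : M) : N (X + Y) <= N X + N Y.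
Proof. by case: normN. Qed.

Lemma norm_two_term_lt (Ai Bi v w : M) :
  Ai \in unitmx -> Bi \in unitmx -> N (invmx Ai *m Bi) < 1 -> w != 0 ->
  v = - (invmx Bi *m (Ai *m w)) -> N w < N v.
Proof.
move=> Ai_unit Bi_unit P_lt1 w_neq0 def_v.
have def_w : w = - ((invmx Ai *m Bi) *m v).
  by rewrite def_v mulmxN opprK -mulmxA mulKVmx // mulKmx.
have w_le : N w <= N (invmx Ai *m Bi) * N v by rewrite def_w normNmx norm_mulmx_le.
have v_gt0 : 0 < N v.
  rewrite lt_def norm_ge0 andbT; apply: contraTneq w_le => ->.
  by rewrite mulr0 lt_geF ?norm_gt0.
by apply: le_lt_trans w_le _; rewrite gtr_pMl.
Qed.

Lemma norm_three_term_lt (Ai Bi Ci u0 u1 u2 : M) :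
  Ai \in unitmx -> Bi \in unitmx -> Ci \in unitmx ->
  N (invmx Ai *m Bi) + N (invmx Ai *m Ci) <= 1 ->
  N u0 < N u1 -> u2 = - (invmx Bi *m (Ai *m u1 + Ci *m u0)) -> N u1 < N u2.
Proof.
move=> Ai_unit Bi_unit Ci_unit dom u01 def_u2.
have def_u1 : u1 = - ((invmx Ai *m Bi) *m u2) + - ((invmx Ai *m Ci) *m u0).
  rewrite def_u2 mulmxN opprK -[_ *m Bi *m _]mulmxA mulKVmx // mulmxDr.
  by rewrite mulKmx // -mulmxA addrK.
apply: (ltr_three_term (norm_ge0 _) _ dom (norm_ge0 _) u01).
  by rewrite norm_gt0 // unitmx_neq0 // unitmx_mul unitmx_inv Ai_unit.
rewrite {1}def_u1; apply: le_trans (norm_addmx_le _ _) _.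
by rewrite !normNmx lerD ?norm_mulmx_le.
Qed.

End MatrixNorm.

Lemma sumr_nat_support (V : zmodType) (G : nat -> V) n s :
  uniq s -> all (fun i => i < n)%N s ->
  (forall i, (i < n)%N -> i \notin s -> G i = 0) ->
  \sum_(0 <= i < n) G i = \sum_(i <- s) G i.
Proof.
move=> s_uniq /allP s_lt G0.
rewrite (bigID (mem s)) /= [X in _ + X]big1_seq ?addr0; last first.
  by move=> i /andP[i_notin]; rewrite mem_index_iota => /andP[_ /G0]; apply.
rewrite -big_filter; apply/perm_big/uniq_perm => //.
  by rewrite filter_uniq // iota_uniq.
move=> i; rewrite mem_filter mem_index_iota leq0n /=.
by apply/andP/idP => [[]|i_s] //; split; last exact: s_lt.
Qed.

Section Tridiagonal.
Variables (C : numClosedFieldType) (m : nat) (A B Cm : nat -> 'M[C]_m.+1).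
Local Notation T := (tridiag A B Cm).
Local Notation U := (Umat A B Cm).
Local Notation X := (Xmat A B Cm).
Local Notation Y := (Ymat A B Cm).

Lemma tridiag_diag i : T i i = A i.
Proof. by rewrite /tridiag eqxx. Qed.

Lemma tridiag_super i : T i i.+1 = B i.
Proof. by rewrite /tridiag (ltn_eqF (ltnSn i)) eqxx. Qed.

Lemma tridiag_sub i : T i.+1 i = Cm i.
Proof. by rewrite /tridiag (gtn_eqF (ltnSn i)) (ltn_eqF (leqnSn i.+1)) eqxx. Qed.

Lemma tridiag_out i j : (i.+1 < j \/ j.+1 < i)%N -> T i j = 0.
Proof. by move=> ij; rewrite /tridiag !ifN //; lia. Qed.

Lemma Umat_rec k :
  U k.+3 = - (invmx (B k.+2) *m (A k.+2 *m U k.+2 + Cm k.+1 *m U k.+1)).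
Proof. by rewrite /Umat /= addrC; case: (Useq A B Cm k). Qed.

Lemma Xmat_rec k :
  X k.+3 = - ((X k.+1 *m B k.+1 + X k.+2 *m A k.+2) *m invmx (Cm k.+2)).
Proof. by rewrite /Xmat /=; case: (Xseq A B Cm k). Qed.

Lemma Ymat_rec n i : (i.+2 <= n)%N ->
  Y n i = - (invmx (Cm i) *m (A i.+1 *m Y n i.+1 + B i.+1 *m Y n i.+2)).
Proof.
move=> i_lt; rewrite /Ymat.
have [k def_k] : exists k, n = (k + i.+2)%N by exists (n - i.+2)%N; lia.
have -> : (n - i = k.+2)%N by lia.
have -> : (n - i.+1 = k.+1)%N by lia.
have -> : (n - i.+2 = k)%N by lia.
rewrite /=; case: (Yseq A B Cm n k) => y1 y2 /=.
by have -> : (n - k.+2 = i)%N by lia.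
Qed.

Lemma Ymat_last n : Y n n = invmx (X n *m A n + X n.-1 *m B n.-1).
Proof. by rewrite /Ymat subnn. Qed.

Lemma Ymat_pred_last n : (0 < n)%N ->
  Y n n.-1 = - (invmx (Cm n.-1) *m (A n *m Y n n)).
Proof.
by move=> n_gt0; rewrite /Ymat subnn (_ : n - n.-1 = 1)%N /= -?mulmxA //; lia.
Qed.

Lemma sum_tridiag_col (F : nat -> 'M[C]_m.+1) n j s :
  uniq s -> all (fun i => i < n)%N s ->
  (forall i, (i < n)%N -> (j <= i.+1 <= j.+2)%N -> i \in s) ->
  \sum_(i < n) F i *m T i.+1 j.+1 = \sum_(i <- s) F i *m T i.+1 j.+1.
Proof.
move=> s_uniq s_lt s_supp.
rewrite -(big_mkord xpredT (fun i => F i *m T i.+1 j.+1)).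
rewrite (sumr_nat_support s_uniq s_lt) //.
move=> i i_lt i_notin; rewrite tridiag_out ?mulmx0 //.
have : ~~ (j <= i.+1 <= j.+2)%N by apply: contra i_notin; exact: s_supp.
lia.
Qed.

Lemma Xmat_tridiag_col n j : (j.+1 < n)%N ->
  (forall i, (1 <= i < n)%N -> Cm i \in unitmx) ->
  \sum_(i < n) X i.+1 *m T i.+1 j.+1 = 0.
Proof.
move=> j_lt Cm_unit; case: j j_lt => [|k] k_lt.
  rewrite (@sum_tridiag_col (fun i => X i.+1) _ _ [:: 0; 1]%N) => [|//|/=|i];
    rewrite ?inE; try lia.
  rewrite !big_cons big_nil addr0 tridiag_diag tridiag_sub.
  by rewrite mulNmx mulmxKV ?Cm_unit // subrr.
rewrite (@sum_tridiag_col (fun i => X i.+1) _ _ [:: k; k.+1; k.+2]) => [|/=|/=|i];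
  rewrite ?inE; try lia.
rewrite !big_cons big_nil addr0 tridiag_super tridiag_diag tridiag_sub Xmat_rec.
by rewrite mulNmx mulmxKV ?Cm_unit ?addrA ?subrr //; lia.
Qed.

Lemma Xmat_tridiag_last k :
  \sum_(i < k.+2) X i.+1 *m T i.+1 k.+2 = X k.+2 *m A k.+2 + X k.+1 *m B k.+1.
Proof.
rewrite (@sum_tridiag_col (fun i => X i.+1) _ _ [:: k; k.+1]) => [|/=|/=|i];
  rewrite ?inE; try lia.
by rewrite !big_cons big_nil addr0 tridiag_super tridiag_diag addrC.
Qed.

Lemma Xmat_last_neq0 n : (2 <= n)%N -> blockmx n T \in unitmx ->
  (forall i, (1 <= i < n)%N -> Cm i \in unitmx) ->
  X n *m A n + X n.-1 *m B n.-1 != 0.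
Proof.
case: n => [|[|k]] // _ T_unit Cm_unit; apply/eqP => last0.
pose W := \mxrow_(i < k.+2) (X i.+1 : 'M_(m.+1, (fun _ : 'I_k.+2 => m.+1) i)).
have WT0 : W *m blockmx k.+2 T = 0.
  rewrite mul_mxrow_mxblock -(mxrow0 (q_ := fun _ : 'I_k.+2 => m.+1)).
  apply: eq_mxrow => -[j j_lt] /=.
  have [j_lt'|j_eq] : (j.+1 < k.+2)%N \/ j = k.+1 by lia.
    exact: Xmat_tridiag_col.
  by rewrite j_eq Xmat_tridiag_last.
have : W = 0 by rewrite -(mulmxK T_unit W) WT0 mul0mx.
move/(congr1 (fun V => submxrow V ord0)); rewrite mxrowK submxrow0 /=.
by apply/eqP; rewrite oner_neq0.
Qed.

End Tridiagonal.

Section Monotonicity.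
Variables (C : numClosedFieldType) (m n : nat) (N : 'M[C]_m.+1 -> C).
Variables (A B Cm : nat -> 'M[C]_m.+1).
Hypothesis normN : submult_norm N.
Hypothesis B_unit : forall i, (1 <= i < n)%N -> B i \in unitmx.
Hypothesis Cm_unit : forall i, (1 <= i < n)%N -> Cm i \in unitmx.
Hypothesis dominant : row_block_dd N n (tridiag A B Cm).
Local Notation T := (tridiag A B Cm).
Local Notation U := (Umat A B Cm).
Local Notation Y := (Ymat A B Cm n).

Lemma dominant_diag_unit i : (1 <= i <= n)%N -> A i \in unitmx.
Proof. by move=> /dominant[]; rewrite tridiag_diag. Qed.

Lemma dominant_tridiag i : (0 < i)%N -> (i.+1 < n)%N ->
  N (invmx (A i.+1) *m Cm i) + N (invmx (A i.+1) *m B i.+1) <= 1.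
Proof.
move=> i_gt0 i_lt; have i_range : (1 <= i.+1 <= n)%N by lia.
have [_] := dominant i_range; apply: le_trans.
have mem_iota j : (1 <= j <= n)%N -> j \in index_iota 1 n.+1.
  by move=> j_in; rewrite mem_index_iota; lia.
rewrite big_mkcond (bigD1_seq i) ?mem_iota ?iota_uniq //=; last by lia.
rewrite big_mkcond (bigD1_seq i.+2) ?mem_iota ?iota_uniq //=.
rewrite !ifT; try lia.
rewrite tridiag_sub tridiag_diag tridiag_super addrA lerDl.
by apply: sumr_ge0 => j _; do 2 case: ifP => // _; apply: norm_ge0.
Qed.

Lemma norm_Umat_lt i : N (invmx (A 1) *m B 1) < 1 ->
  (1 <= i < n)%N -> N (U i) < N (U i.+1).
Proof.
move=> first_lt1; elim: i => [|[|k] IH] // k_lt.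
  apply: (norm_two_term_lt normN _ _ first_lt1 (oner_neq0 _)) => //.
    by apply: dominant_diag_unit; lia.
  by apply: B_unit; lia.
apply: (norm_three_term_lt normN _ _ _ _ (IH _)) (Umat_rec _ _ _ _).
- by apply: dominant_diag_unit; lia.
- by apply: B_unit; lia.
- by apply: Cm_unit; lia.
- by rewrite addrC; apply: dominant_tridiag; lia.
- lia.
Qed.

Lemma norm_Ymat_lt i :
  blockmx n T \in unitmx -> N (invmx (A n) *m Cm n.-1) < 1 ->
  (1 <= i < n)%N -> N (Y i.+1) < N (Y i).
Proof.
move=> T_unit last_lt1 /andP[i_ge1 i_lt].
have [k def_n] : exists k, n = (i + k.+1)%N by exists (n - i.+1)%N; lia.
elim: k i i_ge1 i_lt def_n => [|k IH] i i_ge1 i_lt def_n.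
  have -> : i = n.-1 by lia.
  have -> : n.-1.+1 = n by lia.
  apply: (norm_two_term_lt normN _ _ last_lt1 _ (Ymat_pred_last A B Cm _)); try lia.
  - by apply: dominant_diag_unit; lia.
  - by apply: Cm_unit; lia.
  rewrite Ymat_last; set M := _ + _.
  have M_neq0 : M != 0 by apply: Xmat_last_neq0 => //; lia.
  have [M_unit|M_sing] := boolP (M \in unitmx).
    by rewrite unitmx_neq0 ?unitmx_inv.
  by rewrite invmx_out.
apply: (norm_three_term_lt normN _ _ _ _ (IH i.+1 _ _ _)) (Ymat_rec A B Cm _); try lia.
- by apply: dominant_diag_unit; lia.
- by apply: Cm_unit; lia.
- by apply: B_unit; lia.
- by apply: dominant_tridiag; lia.
Qed.

End Monotonicity.

Theorem lemma2p3 (C : numClosedFieldType) (m n : nat) (N : 'M[C]_m -> C)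
  (A B Cm : nat -> 'M[C]_m) :
  (0 < m)%N ->
  submult_norm N ->
  (2 <= n)%N ->
  blockmx n (tridiag A B Cm) \in unitmx ->
  (forall i, (1 <= i < n)%N -> B i \in unitmx /\ Cm i \in unitmx) ->
  row_block_dd N n (tridiag A B Cm) ->
  N (invmx (A 1%N) *m B 1%N) < 1 ->
  N (invmx (A n) *m Cm n.-1) < 1 ->
  (forall i, (1 <= i < n)%N -> N (Umat A B Cm i) < N (Umat A B Cm i.+1)) /\
  (forall i, (1 <= i < n)%N -> N (Ymat A B Cm n i.+1) < N (Ymat A B Cm n i)).
Proof.
case: m N A B Cm => [|m] // N A B Cm _ normN _ T_unit BC_unit dominant.
move=> first_lt1 last_lt1.
have B_unit i (i_in : (1 <= i < n)%N) := (BC_unit i i_in).1.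
have Cm_unit i (i_in : (1 <= i < n)%N) := (BC_unit i i_in).2.
split=> i i_in.
  exact: (norm_Umat_lt normN B_unit Cm_unit dominant).
exact: (norm_Ymat_lt normN B_unit Cm_unit dominant).
Qed.
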